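(* Let $(Q,\circ)$ be a group with identity $e$, and let $(Q,\star)$ be a right modular, unipotent magma with a left unit $\hat{e}$. If $(Q,\circ)$ and $(Q,\star)$ are double magma partners, i.e. $(x\circ y)\star(z\circ w)=(x\star z)\circ(y\star w)$ for all $x,y,z,w\in Q$, then $(Q,\circ)$ is abelian and $x\star y=x^{-1}\circ y$ for all $x,y\in Q$.
   Context: A magma $(Q,\star)$ is right modular if $(x\star y)\star z=(z\star y)\star x$ for all $x,y,z$; unipotent if $x\star x=y\star y$ for all $x,y$; $\hat{e}$ is a left unit if $\hat{e}\star x=x$ for all $x$. *)

Definition is_group {Q : Type} (op : Q -> Q -> Q) (e : Q) (inv : Q -> Q) : Prop :=
  (forall x y z, op (op x y) z = op x (op y z)) /\
  (forall x, op e x = x) /\ (forall x, op x e = x) /\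
  (forall x, op (inv x) x = e) /\ (forall x, op x (inv x) = e).

Definition right_modular {Q : Type} (s : Q -> Q -> Q) : Prop :=
  forall x y z, s (s x y) z = s (s z y) x.

Definition unipotent {Q : Type} (s : Q -> Q -> Q) : Prop :=
  forall x y, s x x = s y y.

Definition left_unit {Q : Type} (s : Q -> Q -> Q) (u : Q) : Prop :=
  forall x, s u x = x.

Definition double_magma_partners {Q : Type} (o s : Q -> Q -> Q) : Prop :=
  forall x y z w, s (o x y) (o z w) = o (s x z) (s y w).

(** Splitting [x ⋆ y = (x ∘ e) ⋆ (e ∘ y)] with the interchange law gives
    [x ⋆ y = (x ⋆ e) ∘ (e ⋆ y)].  The left unit forces [e ⋆ y = y], and then
    unipotency [x ⋆ x = e ⋆ e = e] forces [x ⋆ e = x⁻¹], whence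
    [x ⋆ y = x⁻¹ ∘ y].  The interchange law with [e = e ∘ e] also makes
    [x ↦ x ⋆ e = x⁻¹] a homomorphism; since inversion is always an
    anti-homomorphism and is surjective, [∘] is commutative. *)

From Stdlib Require Import Setoid.

Section GroupFacts.

Context {Q : Type} {o : Q -> Q -> Q} {e : Q} {inv : Q -> Q}.
Hypothesis group : is_group o e inv.

Let opA : forall x y z, o (o x y) z = o x (o y z) := proj1 group.
Let op1x : forall x, o e x = x := proj1 (proj2 group).
Let opx1 : forall x, o x e = x := proj1 (proj2 (proj2 group)).
Let opVx : forall x, o (inv x) x = e := proj1 (proj2 (proj2 (proj2 group))).
Let opxV : forall x, o x (inv x) = e := proj2 (proj2 (proj2 (proj2 group))).

Lemma inv_unique (a x : Q) : o a x = e -> a = inv x.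
Proof.
  intros H. rewrite <- (opx1 a), <- (opxV x), <- opA, H, op1x. reflexivity.
Qed.

Lemma inv_inv (x : Q) : inv (inv x) = x.
Proof. symmetry. apply inv_unique, opxV. Qed.

Lemma inv_op (x y : Q) : inv (o x y) = o (inv y) (inv x).
Proof.
  symmetry. apply inv_unique.
  rewrite opA, <- (opA (inv x)), opVx, op1x, opVx. reflexivity.
Qed.

Lemma op_comm_of_inv_morph :
  (forall x y, inv (o x y) = o (inv x) (inv y)) -> forall x y, o x y = o y x.
Proof.
  intros Hmorph x y.
  rewrite <- (inv_inv (o x y)), <- (inv_inv (o y x)), Hmorph, (inv_op y x).
  reflexivity.
Qed.

End GroupFacts.

Section Partners.

Context {Q : Type} {o : Q -> Q -> Q} {e : Q} {inv : Q -> Q} {s : Q -> Q -> Q}.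
Hypothesis group : is_group o e inv.
Hypothesis partners : double_magma_partners o s.

Let op1x : forall x, o e x = x := proj1 (proj2 group).
Let opx1 : forall x, o x e = x := proj1 (proj2 (proj2 group)).

Lemma partners_split (x y : Q) : s x y = o (s x e) (s e y).
Proof. rewrite <- partners, opx1, op1x. reflexivity. Qed.

Lemma partners_unit_l {ehat : Q} : left_unit s ehat -> forall y, s e y = y.
Proof.
  intros Hunit y.
  rewrite <- (Hunit y) at 2. rewrite (partners_split ehat y), Hunit, op1x.
  reflexivity.
Qed.

Lemma partners_unit_r {ehat : Q} :
  left_unit s ehat -> unipotent s -> forall x, s x e = inv x.
Proof.
  intros Hunit Huni x.
  apply (inv_unique group).
  rewrite <- (partners_unit_l Hunit x) at 2.
  rewrite <- partners_split, (Huni x e).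
  apply (partners_unit_l Hunit).
Qed.

Lemma partners_morph_r (x y : Q) : s (o x y) e = o (s x e) (s y e).
Proof. rewrite <- partners, op1x. reflexivity. Qed.

End Partners.

Theorem theorem6p2 (Q : Type) (o : Q -> Q -> Q) (e : Q) (inv : Q -> Q)
  (s : Q -> Q -> Q) (ehat : Q) :
  is_group o e inv ->
  right_modular s -> unipotent s -> left_unit s ehat ->
  double_magma_partners o s ->
  (forall x y, o x y = o y x) /\ (forall x y, s x y = o (inv x) y).
Proof.
  intros Hgroup _ Huni Hunit Hpartners.
  pose proof (partners_unit_r Hgroup Hpartners Hunit Huni) as Hinv.
  split.
  - apply (op_comm_of_inv_morph Hgroup). intros x y.
    rewrite <- !Hinv. apply (partners_morph_r Hgroup Hpartners).
  - intros x y.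
    rewrite (partners_split Hgroup Hpartners), Hinv,
      (partners_unit_l Hgroup Hpartners Hunit).
    reflexivity.
Qed.
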